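(* Let $X$ be a locally compact metrizable space, $F$ a discrete multivalued dynamical system on $X$ and $N$ an isolating neighborhood for $F$. Then for every $n\in\mathbb{N}$ there exist weak index pairs $P^1,\dots,P^n$ in $N$ such that $P^i_1\subset\operatorname{int}_N P^{i+1}_1$ and $P^i_2\subset\operatorname{int}_N P^{i+1}_2$ for $i=1,\dots,n-1$.
   Context: A discrete multivalued dynamical system (dmds) on $X$ is a usc map $F:X\times\mathbb{Z}\multimap X$ with compact values such that $F(x,0)=\{x\}$; $F(F(x,n),m)=F(x,n+m)$ whenever $nm\ge0$; $y\in F(x,-1)\iff x\in F(y,1)$; it is identified with its generator $F=F(\cdot,1)$. A solution through $x$ on an interval $I\ni0$ of $\mathbb{Z}$ is $\sigma:I\to X$ with $\sigma(0)=x$, $\sigma(n+1)\in F(\sigma(n))$; $\operatorname{Inv}N$ is the set of $x\in N$ with a solution $\sigma:\mathbb{Z}\to N$ through $x$. A compact $N$ is an isolating neighborhood if $\operatorname{Inv}N\subset\operatorname{int}N$. With $\operatorname{bd}_FA:=\operatorname{cl}A\cap\operatorname{cl}(F(A)\setminus A)$, a weak index pair in $N$ is a pair of compact sets $P_2\subset P_1\subset N$ with (a) $F(P_i)\cap N\subset P_i$ for $i=1,2$, (b) $\operatorname{bd}_FP_1\subset P_2$, (c) $\operatorname{Inv}N\subset\operatorname{int}(P_1\setminus P_2)$, (d) $P_1\setminus P_2\subset\operatorname{int}N$. $\operatorname{int}_N$ denotes interior relative to $N$. *)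

From Stdlib Require Import Reals ZArith List.
Open Scope R_scope.

Definition subset {X : Type} (A B : X -> Prop) : Prop := forall x, A x -> B x.

Definition is_metric {X : Type} (d : X -> X -> R) : Prop :=
  (forall x y, 0 <= d x y) /\
  (forall x y, d x y = 0 <-> x = y) /\
  (forall x y, d x y = d y x) /\
  (forall x y z, d x z <= d x y + d y z).

Definition metrizable {X : Type} (opens : (X -> Prop) -> Prop) : Prop :=
  exists d : X -> X -> R, is_metric d /\
    forall U : X -> Prop,
      opens U <-> (forall x, U x -> exists eps, 0 < eps /\
                     forall y, d x y < eps -> U y).

Definition interior {X : Type} (opens : (X -> Prop) -> Prop) (A : X -> Prop)
  : X -> Prop :=
  fun x => exists U, opens U /\ U x /\ subset U A.

Definition interior_in {X : Type} (opens : (X -> Prop) -> Prop) (N A : X -> Prop)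
  : X -> Prop :=
  fun x => N x /\ exists U, opens U /\ U x /\ (forall y, U y -> N y -> A y).

Definition closure {X : Type} (opens : (X -> Prop) -> Prop) (A : X -> Prop)
  : X -> Prop :=
  fun x => forall U, opens U -> U x -> exists y, U y /\ A y.

Definition compact {X : Type} (opens : (X -> Prop) -> Prop) (K : X -> Prop) : Prop :=
  forall (I : Type) (U : I -> X -> Prop),
    (forall i, opens (U i)) ->
    subset K (fun x => exists i, U i x) ->
    exists l : list I, subset K (fun x => exists i, In i l /\ U i x).

Definition locally_compact {X : Type} (opens : (X -> Prop) -> Prop) : Prop :=
  forall x : X, exists K, compact opens K /\ interior opens K x.

(* a multivalued map G : X -o X is encoded as G x y  <->  y \in G(x) *)
Definition usc {X : Type} (opens : (X -> Prop) -> Prop) (G : X -> X -> Prop) : Prop :=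
  forall x U, opens U -> subset (G x) U ->
    exists V, opens V /\ V x /\ forall x', V x' -> subset (G x') U.

Definition image {X : Type} (G : X -> X -> Prop) (A : X -> Prop) : X -> Prop :=
  fun y => exists x, A x /\ G x y.

(* discrete multivalued dynamical system F : X x Z -o X,
   F x n y  <->  y \in F(x,n).  Since Z is discrete, upper semicontinuity on
   X x Z amounts to upper semicontinuity of each F(.,n). *)
Definition is_dmds {X : Type} (opens : (X -> Prop) -> Prop)
  (F : X -> Z -> X -> Prop) : Prop :=
  (forall n, usc opens (fun x => F x n)) /\
  (forall x n, compact opens (F x n)) /\
  (forall x y, F x 0%Z y <-> y = x) /\
  (forall x n m, (0 <= n * m)%Z ->
     forall y, image (fun z => F z m) (F x n) y <-> F x (n + m)%Z y) /\
  (forall x y, F x (-1)%Z y <-> F y 1%Z x).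

Definition gen {X : Type} (F : X -> Z -> X -> Prop) : X -> X -> Prop :=
  fun x => F x 1%Z.

Definition Inv {X : Type} (F : X -> Z -> X -> Prop) (N : X -> Prop) : X -> Prop :=
  fun x => N x /\ exists sigma : Z -> X,
    sigma 0%Z = x /\
    forall n : Z, N (sigma n) /\ gen F (sigma n) (sigma (n + 1)%Z).

Definition isolating_neighborhood {X : Type} (opens : (X -> Prop) -> Prop)
  (F : X -> Z -> X -> Prop) (N : X -> Prop) : Prop :=
  compact opens N /\ subset (Inv F N) (interior opens N).

Definition setminus {X : Type} (A B : X -> Prop) : X -> Prop :=
  fun x => A x /\ ~ B x.

Definition bdF {X : Type} (opens : (X -> Prop) -> Prop)
  (F : X -> Z -> X -> Prop) (A : X -> Prop) : X -> Prop :=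
  fun x => closure opens A x /\
           closure opens (setminus (image (gen F) A) A) x.

Definition weak_index_pair {X : Type} (opens : (X -> Prop) -> Prop)
  (F : X -> Z -> X -> Prop) (N P1 P2 : X -> Prop) : Prop :=
  compact opens P1 /\ compact opens P2 /\
  subset P2 P1 /\ subset P1 N /\
  subset (fun y => image (gen F) P1 y /\ N y) P1 /\
  subset (fun y => image (gen F) P2 y /\ N y) P2 /\
  subset (bdF opens F P1) P2 /\
  subset (Inv F N) (interior opens (setminus P1 P2)) /\
  subset (setminus P1 P2) (interior opens N).

From Stdlib Require Import Reals ZArith List Lra Lia Classical IndefiniteDescription.
Open Scope R_scope.

(* Write [F_N^j(C)] for the points reached from [C] by [j] steps of [F] inside [N], and
   [A] for the points having a forward orbit of length [k] in [N]. By compactness some [k]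
   makes every point with forward and backward orbits of length [k] in [N] lie in [int N].
   For a compact neighbourhood [W ⊂ N] of [Inv N] and a compact [M ⊂ W] disjoint from [A],
     P1 = ⋃_{j<k} F_N^j(W) ∪ F_N^k(N),   P2 = ⋃_{j<k} F_N^j((P1 \ int N) ∪ M)
   are positively invariant relative to [N], and [P2] misses [A ⊇ Inv N]; given that
   [F_N^j(W) ∩ A ⊂ int N] for [j < k], this is a weak index pair. These requirements on
   [W] and [M] are closed conditions on finitely many iterates, so by upper semicontinuity
   they survive enlarging [W] and [M] to small compact neighbourhoods in [N] of [P1] and
   [P2]; iterating the enlargement gives the nested sequence. *)

Lemma chain_exists {A : Type} (P : A -> Prop) (R : A -> A -> Prop) (a : A) :
  (forall x, P x -> exists y, P y /\ R x y) -> P a ->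
  exists s : nat -> A, s O = a /\ forall n, P (s n) /\ R (s n) (s (S n)).
Proof.
  intros Hstep Ha.
  destruct (functional_choice (fun x y : {x | P x} => R (proj1_sig x) (proj1_sig y)))
    as [f Hf].
  { intros [x Hx]. destruct (Hstep x Hx) as [y [Hy Hxy]]. now exists (exist _ y Hy). }
  exists (fun n => proj1_sig (Nat.iter n f (exist _ a Ha))).
  split; [reflexivity |]. intros n. split; [apply proj2_sig | exact (Hf _)].
Qed.

Lemma list_lower_bound_pos {A : Type} (f : A -> R) (l : list A) :
  (forall a, In a l -> 0 < f a) -> exists r, 0 < r /\ forall a, In a l -> r <= f a.
Proof.
  induction l as [|a l IH]; intros Hpos.
  - exists 1. split; [lra | intros a []].
  - destruct IH as [r [Hr Hl]]; [intros b Hb; apply Hpos; now right |].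
    exists (Rmin r (f a)). split; [apply Rmin_pos; [exact Hr | apply Hpos; now left] |].
    intros b [<- | Hb]; [apply Rmin_r |].
    eapply Rle_trans; [apply Rmin_l | now apply Hl].
Qed.

Section Reach.
Context {X : Type} (N : X -> Prop).

(* Endpoints of [r]-paths of length [j] inside [N] starting in [C]; for [r = gen F]
   this is [F_N^j(C)]. *)
Fixpoint reach (r : X -> X -> Prop) (C : X -> Prop) (j : nat) : X -> Prop :=
  match j with
  | O => fun y => C y /\ N y
  | S j => fun y => N y /\ exists x, reach r C j x /\ r x y
  end.

Lemma reach_in {r C j x} : reach r C j x -> N x.
Proof. destruct j; simpl; tauto. Qed.

Lemma reach_mono {r} {C C' : X -> Prop} {j x} :
  (forall y, C y -> N y -> C' y) -> reach r C j x -> reach r C' j x.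
Proof.
  intros HC. revert x. induction j as [|j IH]; simpl; intros y.
  - intros [Cy Ny]. auto.
  - intros [Ny [x [Hx Hxy]]]. split; [exact Ny | exists x; auto].
Qed.

Lemma reach_N_S {r k x} : reach r N (S k) x -> reach r N k x.
Proof.
  revert x. induction k as [|k IH]; simpl; intros y.
  - tauto.
  - intros [Ny [x [Hx Hxy]]]. split; [exact Ny | exists x; auto].
Qed.

Lemma reach_N_le {r} m k {x} : (m <= k)%nat -> reach r N k x -> reach r N m x.
Proof. induction 1; auto using reach_N_S. Qed.

Lemma reach_reach {r C m j x} : reach r (reach r C m) j x -> reach r C (j + m) x.
Proof.
  revert x. induction j as [|j IH]; simpl; intros y.
  - tauto.
  - intros [Ny [x [Hx Hxy]]]. split; [exact Ny | exists x; auto].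
Qed.

Lemma reach_invariant {r} {C P : X -> Prop} {j x} :
  (forall y z, P y -> r y z -> N z -> P z) -> subset C P -> reach r C j x -> P x.
Proof.
  intros Hinv HC. revert x. induction j as [|j IH]; simpl; intros z.
  - intros [Cz _]. auto.
  - intros [Nz [y [Hy Hyz]]]. eauto.
Qed.

Lemma reach_converse {r r'} :
  (forall x y, r x y <-> r' y x) ->
  forall C j k y, reach r C j y -> reach r' N k y ->
  exists c, C c /\ reach r' N (j + k) c.
Proof.
  intros Hconv C j. induction j as [|j IH]; intros k y.
  - intros [Cy _] Hy. eauto.
  - intros [Ny [x [Hx Hxy]]] Hy.
    destruct (IH (S k) x Hx) as [c [Cc Hc]].
    + split; [exact (reach_in Hx) | exists y; split; [exact Hy | now apply Hconv]].
    + exists c. split; [exact Cc | now rewrite <- plus_n_Sm in Hc].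
Qed.

Lemma reach_along {r} {s : Z -> X} {e : Z} :
  (forall n, N (s n)) -> (forall n, r (s (n + e)%Z) (s n)) ->
  forall m n, reach r N m (s n).
Proof.
  intros HN Hr m. induction m as [|m IH]; intros n; simpl.
  - auto.
  - split; [apply HN | exists (s (n + e)%Z); auto].
Qed.

End Reach.

Definition metric_open {X : Type} (d : X -> X -> R) (U : X -> Prop) : Prop :=
  forall x, U x -> exists eps, 0 < eps /\ forall y, d x y < eps -> U y.

Definition closed {X : Type} (opens : (X -> Prop) -> Prop) (C : X -> Prop) : Prop :=
  opens (fun x => ~ C x).

Section MetricSpace.
Context {X : Type} (opens : (X -> Prop) -> Prop) (d : X -> X -> R).
Hypothesis d_metric : is_metric d.
Hypothesis opens_metric : forall U, opens U <-> metric_open d U.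

Lemma open_ext {U V : X -> Prop} : opens U -> (forall x, U x <-> V x) -> opens V.
Proof.
  intros HU HUV. apply opens_metric. intros x Vx.
  destruct (proj1 (opens_metric U) HU x (proj2 (HUV x) Vx)) as [e [He Hball]].
  exists e. split; [exact He | intros y Hy; apply HUV, Hball, Hy].
Qed.

Lemma open_bigcup {I : Type} (P : I -> Prop) {U : I -> X -> Prop} :
  (forall i, opens (U i)) -> opens (fun x => exists i, P i /\ U i x).
Proof.
  intros HU. apply opens_metric. intros x [i [Hi Ux]].
  destruct (proj1 (opens_metric _) (HU i) x Ux) as [e [He Hball]].
  exists e. split; [exact He | intros y Hy; exists i; auto].
Qed.

Lemma open_or {U V : X -> Prop} : opens U -> opens V -> opens (fun x => U x \/ V x).
Proof.
  intros HU HV. apply opens_metric. intros x [Ux | Vx].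
  - destruct (proj1 (opens_metric U) HU x Ux) as [e [He Hball]]. exists e; auto.
  - destruct (proj1 (opens_metric V) HV x Vx) as [e [He Hball]]. exists e; auto.
Qed.

Lemma open_and {U V : X -> Prop} : opens U -> opens V -> opens (fun x => U x /\ V x).
Proof.
  intros HU HV. apply opens_metric. intros x [Ux Vx].
  destruct (proj1 (opens_metric U) HU x Ux) as [e1 [He1 Hball1]].
  destruct (proj1 (opens_metric V) HV x Vx) as [e2 [He2 Hball2]].
  exists (Rmin e1 e2). split; [now apply Rmin_pos |].
  intros y Hy. split.
  - apply Hball1. eapply Rlt_le_trans; [exact Hy | apply Rmin_l].
  - apply Hball2. eapply Rlt_le_trans; [exact Hy | apply Rmin_r].
Qed.

Lemma open_empty : opens (fun _ => False).
Proof. apply opens_metric. intros x []. Qed.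

Lemma open_full : opens (fun _ => True).
Proof. apply opens_metric. intros x _. exists 1. split; [lra | auto]. Qed.

Lemma open_ball (x : X) (r : R) : opens (fun y => d x y < r).
Proof.
  destruct d_metric as [_ [_ [_ d_tri]]]. apply opens_metric. intros y Hy.
  exists (r - d x y). split; [lra |]. intros z Hz. pose proof (d_tri x y z). lra.
Qed.

Lemma interior_open (A : X -> Prop) : opens (interior opens A).
Proof.
  apply opens_metric. intros x [U [HU [Ux HUA]]].
  destruct (proj1 (opens_metric U) HU x Ux) as [e [He Hball]].
  exists e. split; [exact He | intros y Hy; exists U; auto].
Qed.

Lemma interior_sub (A : X -> Prop) : subset (interior opens A) A.
Proof. intros x [U [_ [Ux HUA]]]. auto. Qed.

Lemma interior_in_mono {M A B : X -> Prop} :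
  subset A B -> subset (interior_in opens M A) (interior_in opens M B).
Proof. intros HAB x [Mx [U [HU [Ux HUA]]]]. split; [exact Mx | exists U; auto]. Qed.

Lemma interior_in_and {M A B : X -> Prop} {x} :
  interior_in opens M A x -> interior_in opens M B x ->
  interior_in opens M (fun y => A y /\ B y) x.
Proof.
  intros [Mx [U [HU [Ux HUA]]]] [_ [V [HV [Vx HVB]]]].
  split; [exact Mx | exists (fun y => U y /\ V y)].
  split; [now apply open_and | split; [auto | intros y [Uy Vy] My; auto]].
Qed.

Lemma interior_in_interior {M A : X -> Prop} {x} :
  interior_in opens M A x -> interior opens M x -> interior opens A x.
Proof.
  intros [_ [U [HU [Ux HUA]]]] [V [HV [Vx HVM]]].
  exists (fun y => U y /\ V y). split; [now apply open_and |].
  split; [auto | intros y [Uy Vy]; auto].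
Qed.

Lemma closed_compl {U : X -> Prop} : opens U -> closed opens (fun x => ~ U x).
Proof. intros HU. apply (open_ext HU). intros x. split; [tauto | apply NNPP]. Qed.

Lemma closed_and {C D : X -> Prop} :
  closed opens C -> closed opens D -> closed opens (fun x => C x /\ D x).
Proof.
  intros HC HD. apply (open_ext (open_or HC HD)).
  intros x. split; [tauto | apply not_and_or].
Qed.

Lemma closed_forall {I : Type} {C : I -> X -> Prop} :
  (forall i, closed opens (C i)) -> closed opens (fun x => forall i, C i x).
Proof.
  intros HC. apply (open_ext (open_bigcup (fun _ => True) HC)). intros x. split.
  - intros [i [_ Hi]] Hall. exact (Hi (Hall i)).
  - intros Hx. destruct (not_all_ex_not _ _ Hx) as [i Hi]. now exists i.
Qed.

Lemma closure_closed {C : X -> Prop} : closed opens C -> subset (closure opens C) C.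
Proof.
  intros HC x Hx. apply NNPP. intros Cx.
  destruct (Hx _ HC Cx) as [y [nCy Cy]]. exact (nCy Cy).
Qed.

Lemma compact_ext {K K' : X -> Prop} :
  compact opens K -> (forall x, K x <-> K' x) -> compact opens K'.
Proof.
  intros HK HKK' I U HU Hcov. destruct (HK I U HU) as [l Hl].
  - intros x Kx. apply Hcov, HKK', Kx.
  - exists l. intros x K'x. apply Hl, HKK', K'x.
Qed.

Lemma compact_empty : compact opens (fun _ => False).
Proof. intros I U _ _. exists nil. intros x []. Qed.

Lemma compact_or {K L : X -> Prop} :
  compact opens K -> compact opens L -> compact opens (fun x => K x \/ L x).
Proof.
  intros HK HL I U HU Hcov.
  destruct (HK I U HU) as [lK HlK]; [intros x Kx; apply Hcov; auto |].
  destruct (HL I U HU) as [lL HlL]; [intros x Lx; apply Hcov; auto |].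
  exists (lK ++ lL). intros x [Kx | Lx].
  - destruct (HlK x Kx) as [i [Hi Ui]]. exists i. split; [apply in_or_app; auto | exact Ui].
  - destruct (HlL x Lx) as [i [Hi Ui]]. exists i. split; [apply in_or_app; auto | exact Ui].
Qed.

Lemma compact_and_closed {K C : X -> Prop} :
  compact opens K -> closed opens C -> compact opens (fun x => K x /\ C x).
Proof.
  intros HK HC I U HU Hcov.
  destruct (HK (option I) (fun o => match o with Some i => U i | None => fun x => ~ C x end))
    as [l Hl].
  - intros [i |]; auto.
  - intros x Kx. destruct (classic (C x)) as [Cx | nCx].
    + destruct (Hcov x (conj Kx Cx)) as [i Ui]. now exists (Some i).
    + now exists None.
  - exists (flat_map (fun o => match o with Some i => i :: nil | None => nil end) l).
    intros x [Kx Cx]. destruct (Hl x Kx) as [[i |] [Hi Ui]]; [| contradiction].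
    exists i. split; [apply in_flat_map; exists (Some i); simpl; auto | exact Ui].
Qed.

Lemma compact_bigcup_lt {K : nat -> X -> Prop} :
  (forall j, compact opens (K j)) ->
  forall k, compact opens (fun x => exists j, (j < k)%nat /\ K j x).
Proof.
  intros HK k. induction k as [|k IH].
  - apply (compact_ext compact_empty). intros x. split; [tauto | intros [j [Hj _]]; lia].
  - apply (compact_ext (compact_or IH (HK k))). intros x. split.
    + intros [[j [Hj Kx]] | Kx]; [exists j | exists k]; split; auto; lia.
    + intros [j [Hj Kx]]. destruct (Nat.eq_dec j k) as [-> | Hjk]; [now right |].
      left. exists j. split; [lia | exact Kx].
Qed.

Lemma compact_point_separation {K : X -> Prop} {x : X} :
  compact opens K -> ~ K x ->
  exists O G, opens O /\ opens G /\ O x /\ subset K G /\ forall z, O z -> G z -> False.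
Proof.
  destruct d_metric as [d_pos [d_zero [d_sym d_tri]]]. intros HK nKx.
  assert (Hfar : forall y, K y -> 0 < d x y / 2).
  { intros y Ky. assert (d x y <> 0) by (intros H0; apply d_zero in H0; subst; auto).
    pose proof (d_pos x y). lra. }
  set (ball := fun (y : {y | K y}) z => d (proj1_sig y) z < d x (proj1_sig y) / 2).
  destruct (HK _ ball (fun y => open_ball _ _)) as [l Hl].
  { intros y Ky. exists (exist _ y Ky). unfold ball; simpl.
    rewrite (proj2 (d_zero y y) eq_refl). now apply Hfar. }
  destruct (list_lower_bound_pos (fun y : {y | K y} => d x (proj1_sig y) / 2) l)
    as [r [Hr Hmin]].
  { intros [y Ky] _. now apply Hfar. }
  exists (fun z => d x z < r), (fun z => exists y, In y l /\ ball y z).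
  split; [apply open_ball |]. split; [apply open_bigcup; intros y; apply open_ball |].
  split; [rewrite (proj2 (d_zero x x) eq_refl); exact Hr |]. split; [exact Hl |].
  intros z Hz [y [Hy Hyz]]. specialize (Hmin y Hy). unfold ball in Hyz.
  pose proof (d_tri x z (proj1_sig y)). rewrite (d_sym z) in H. lra.
Qed.

Lemma compact_closed {K : X -> Prop} : compact opens K -> closed opens K.
Proof.
  intros HK. apply opens_metric. intros x nKx.
  destruct (compact_point_separation HK nKx) as [O [G [HO [HG [Ox [HKG Hdisj]]]]]].
  destruct (proj1 (opens_metric O) HO x Ox) as [e [He Hball]].
  exists e. split; [exact He |]. intros y Hy Ky. exact (Hdisj y (Hball y Hy) (HKG y Ky)).
Qed.

Lemma compact_directed_inter {K : X -> Prop} {I : Type} (i0 : I) {C : I -> X -> Prop} :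
  compact opens K -> (forall i, closed opens (C i)) ->
  (forall i j, exists l, forall x, C l x -> C i x /\ C j x) ->
  (forall i, exists x, K x /\ C i x) ->
  exists x, K x /\ forall i, C i x.
Proof.
  intros HK HC Hdir Hne. apply NNPP. intros Hempty.
  destruct (HK I (fun i x => ~ C i x) HC) as [l Hl].
  { intros x Kx. apply NNPP. intros Hx. apply Hempty. exists x. split; [exact Kx |].
    intros i. apply NNPP. intros nCx. apply Hx. now exists i. }
  assert (Hlow : exists m, forall x, C m x -> forall i, In i l -> C i x).
  { clear Hl. induction l as [|i l [m Hm]].
    - exists i0. intros x _ i [].
    - destruct (Hdir i m) as [m' Hm']. exists m'. intros x Cx j [<- | Hj].
      + apply Hm', Cx.
      + apply Hm; [apply Hm', Cx | exact Hj]. }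
  destruct Hlow as [m Hm]. destruct (Hne m) as [x [Kx Cx]].
  destruct (Hl x Kx) as [i [Hi nCx]]. exact (nCx (Hm x Cx i Hi)).
Qed.

Lemma image_compact {r : X -> X -> Prop} {K : X -> Prop} :
  usc opens r -> (forall x, compact opens (r x)) -> compact opens K ->
  compact opens (image r K).
Proof.
  intros Hr Hval HK I U HU Hcov.
  assert (Hloc : forall x : {x | K x}, exists lV : list I * (X -> Prop),
    opens (snd lV) /\ snd lV (proj1_sig x) /\
    forall x', snd lV x' -> subset (r x') (fun y => exists i, In i (fst lV) /\ U i y)).
  { intros [x Kx]. destruct (Hval x I U HU) as [l Hl].
    - intros y Hy. apply Hcov. now exists x.
    - destruct (Hr x _ (open_bigcup (fun i => In i l) HU) Hl) as [V HV]. now exists (l, V). }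
  destruct (functional_choice _ Hloc) as [f Hf].
  destruct (HK _ (fun x => snd (f x)) (fun x => proj1 (Hf x))) as [lx Hlx].
  { intros x Kx. exists (exist _ x Kx). apply Hf. }
  exists (flat_map (fun x => fst (f x)) lx). intros y [x [Kx Hxy]].
  destruct (Hlx x Kx) as [x0 [Hx0 Vx]].
  destruct (proj2 (proj2 (Hf x0)) x Vx y Hxy) as [i [Hi Ui]].
  exists i. split; [apply in_flat_map; now exists x0 | exact Ui].
Qed.

(* As [p] ranges over the separations of a compact [Q] inside [N], the compact sets
   [setminus N (fst p)] form a directed family of neighbourhoods of [Q] in [N] whose
   intersection is [Q]. *)
Definition separates (Q : X -> Prop) (p : (X -> Prop) * (X -> Prop)) : Prop :=
  opens (fst p) /\ opens (snd p) /\ (forall z, fst p z -> snd p z -> False) /\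
  subset Q (snd p).

Definition sep_join (p q : (X -> Prop) * (X -> Prop)) : (X -> Prop) * (X -> Prop) :=
  (fun x => fst p x \/ fst q x, fun x => snd p x /\ snd q x).

Lemma separates_trivial (Q : X -> Prop) : separates Q (fun _ => False, fun _ => True).
Proof.
  split; [exact open_empty |]. split; [exact open_full |].
  split; [simpl; tauto | intros x _; exact I].
Qed.

Lemma separates_join {Q : X -> Prop} {p q} :
  separates Q p -> separates Q q -> separates Q (sep_join p q).
Proof.
  intros [Op [Gp [Hp HQp]]] [Oq [Gq [Hq HQq]]]. simpl.
  split; [now apply open_or |]. split; [now apply open_and |].
  split; [intros z [Pz | Qz] [Gpz Gqz]; eauto | intros x Qx; split; auto].
Qed.

Lemma setminus_sep_join {N : X -> Prop} {p q x} :
  setminus N (fst (sep_join p q)) x ->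
  setminus N (fst p) x /\ setminus N (fst q) x.
Proof. unfold setminus; simpl; tauto. Qed.

Lemma separates_nbhd {N Q : X -> Prop} {p} :
  separates Q p -> subset Q N -> subset Q (interior_in opens N (setminus N (fst p))).
Proof.
  intros [_ [HG [Hdisj HQG]]] HQN x Qx. split; [auto |].
  exists (snd p). split; [exact HG |]. split; [auto |].
  intros y Gy Ny. split; [exact Ny | intros Oy; exact (Hdisj y Oy Gy)].
Qed.

Lemma setminus_open_compact {N O : X -> Prop} :
  compact opens N -> opens O -> compact opens (setminus N O).
Proof. intros HN HO. exact (compact_and_closed HN (closed_compl HO)). Qed.

Section Limits.
Variables (N : X -> Prop) (r r' : X -> X -> Prop).
Hypothesis N_compact : compact opens N.
Hypothesis r_usc : usc opens r.
Hypothesis r_compact : forall x, compact opens (r x).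
Hypothesis r'_compact : forall x, compact opens (r' x).
Hypothesis r_converse : forall x y, r x y <-> r' y x.

Lemma reach_compact {C : X -> Prop} :
  compact opens C -> forall j, compact opens (reach N r C j).
Proof.
  intros HC j. induction j as [|j IH].
  - exact (compact_and_closed HC (compact_closed N_compact)).
  - apply (compact_ext (compact_and_closed (image_compact r_usc r_compact IH)
                                           (compact_closed N_compact))).
    intros y. unfold image. simpl. tauto.
Qed.

Lemma reach_closed {C : X -> Prop} :
  compact opens C -> forall j, closed opens (reach N r C j).
Proof. intros HC j. exact (compact_closed (reach_compact HC j)). Qed.

(* König's lemma, by the finite intersection property in the compact set [r' x]. *)
Lemma reach_forever_pred (x : X) :
  (forall m, reach N r N m x) -> exists y, r y x /\ forall m, reach N r N m y.
Proof.
  intros Hx.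
  destruct (compact_directed_inter 0%nat (C := fun m => reach N r N m) (r'_compact x))
    as [y [Hxy Hy]].
  - intros m. exact (reach_closed N_compact m).
  - intros i j. exists (Nat.max i j). intros z Hz.
    split; apply (reach_N_le N _ (Nat.max i j)); auto; lia.
  - intros m. destruct (Hx (S m)) as [_ [z [Hz Hzx]]].
    exists z. split; [now apply r_converse | exact Hz].
  - exists y. split; [now apply r_converse | exact Hy].
Qed.

Lemma reach_separations {Q : X -> Prop} :
  compact opens Q -> subset Q N ->
  forall j y, (forall p, separates Q p -> reach N r (setminus N (fst p)) j y) ->
  reach N r Q j y.
Proof.
  intros HQ HQN j. induction j as [|j IH]; intros y Hy.
  - destruct (Hy _ (separates_trivial Q)) as [[Ny _] _].
    split; [| exact Ny]. apply NNPP. intros nQy.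
    destruct (compact_point_separation HQ nQy) as [O [G [HO [HG [Oy [HQG Hdisj]]]]]].
    assert (Hsep : separates Q (O, G)) by (repeat split; auto).
    destruct (Hy _ Hsep) as [[_ nOy] _]. exact (nOy Oy).
  - destruct (Hy _ (separates_trivial Q)) as [Ny _].
    destruct (compact_directed_inter (exist _ _ (separates_trivial Q))
      (C := fun p : {p | separates Q p} => reach N r (setminus N (fst (proj1_sig p))) j)
      (r'_compact y)) as [x [Hyx Hx]].
    + intros [p Hp]. exact (reach_closed (setminus_open_compact N_compact (proj1 Hp)) j).
    + intros [p Hp] [q Hq]. exists (exist _ _ (separates_join Hp Hq)). intros x Hx.
      split; refine (reach_mono N _ Hx); intros z Hz _; apply setminus_sep_join in Hz; tauto.
    + intros [p Hp]. destruct (Hy p Hp) as [_ [x [Hx Hxy]]].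
      exists x. split; [now apply r_converse | exact Hx].
    + split; [exact Ny | exists x; split].
      * apply IH. intros p Hp. exact (Hx (exist _ p Hp)).
      * now apply r_converse.
Qed.

Lemma separation_avoiding {Q E : X -> Prop} (j : nat) :
  compact opens Q -> subset Q N -> closed opens E ->
  (forall x, reach N r Q j x -> ~ E x) ->
  exists p, separates Q p /\ forall x, reach N r (setminus N (fst p)) j x -> ~ E x.
Proof.
  intros HQ HQN HE HQE. apply NNPP. intros Hnone.
  destruct (compact_directed_inter (exist _ _ (separates_trivial Q))
    (C := fun p : {p | separates Q p} =>
            fun x => reach N r (setminus N (fst (proj1_sig p))) j x /\ E x) N_compact)
    as [x [_ Hx]].
  - intros [p Hp]. apply closed_and; [| exact HE].
    exact (reach_closed (setminus_open_compact N_compact (proj1 Hp)) j).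
  - intros [p Hp] [q Hq]. exists (exist _ _ (separates_join Hp Hq)). intros x [Hx Ex].
    split; split; auto; refine (reach_mono N _ Hx);
      intros z Hz _; apply setminus_sep_join in Hz; tauto.
  - intros [p Hp]. apply NNPP. intros Hempty. apply Hnone. exists p. split; [exact Hp |].
    intros x Hx Ex. apply Hempty. exists x. split; [exact (reach_in N Hx) | now split].
  - apply (HQE x); [| exact (proj2 (Hx (exist _ _ (separates_trivial Q))))].
    apply (reach_separations HQ HQN). intros p Hp. exact (proj1 (Hx (exist _ p Hp))).
Qed.

Lemma compact_nbhd_avoiding {Q E : X -> Prop} (k : nat) :
  compact opens Q -> subset Q N -> closed opens E ->
  (forall j x, (j < k)%nat -> reach N r Q j x -> ~ E x) ->
  exists W, compact opens W /\ subset W N /\ subset Q (interior_in opens N W) /\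
    forall j x, (j < k)%nat -> reach N r W j x -> ~ E x.
Proof.
  intros HQ HQN HE HQE.
  assert (Hp : exists p, separates Q p /\
            forall j x, (j < k)%nat -> reach N r (setminus N (fst p)) j x -> ~ E x).
  { induction k as [|k IH].
    - exists (fun _ => False, fun _ => True). split; [apply separates_trivial | intros; lia].
    - destruct IH as [p [Hp Hpk]]; [intros j x Hj; apply (HQE j x); lia |].
      destruct (separation_avoiding k HQ HQN HE (fun x => HQE k x ltac:(lia))) as [q [Hq Hqk]].
      exists (sep_join p q). split; [now apply separates_join |].
      intros j x Hj Hx. destruct (Nat.eq_dec j k) as [-> | Hjk].
      + apply Hqk. refine (reach_mono N _ Hx). intros z Hz _. apply setminus_sep_join in Hz. tauto.
      + apply (Hpk j); [lia |]. refine (reach_mono N _ Hx).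
        intros z Hz _. apply setminus_sep_join in Hz. tauto. }
  destruct Hp as [p [Hp Hpk]]. exists (setminus N (fst p)).
  split; [exact (setminus_open_compact N_compact (proj1 Hp)) |].
  split; [intros x [Nx _]; exact Nx |].
  split; [exact (separates_nbhd Hp HQN) | exact Hpk].
Qed.

End Limits.

Definition gen_inv (F : X -> Z -> X -> Prop) : X -> X -> Prop := fun x => F x (-1)%Z.

Section Dynamics.
Variables (F : X -> Z -> X -> Prop) (N : X -> Prop).
Hypothesis F_dmds : is_dmds opens F.
Hypothesis N_isolating : isolating_neighborhood opens F N.

Lemma gen_usc : usc opens (gen F).
Proof. exact (proj1 F_dmds 1%Z). Qed.

Lemma gen_inv_usc : usc opens (gen_inv F).
Proof. exact (proj1 F_dmds (-1)%Z). Qed.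

Lemma gen_compact x : compact opens (gen F x).
Proof. exact (proj1 (proj2 F_dmds) x 1%Z). Qed.

Lemma gen_inv_compact x : compact opens (gen_inv F x).
Proof. exact (proj1 (proj2 F_dmds) x (-1)%Z). Qed.

Lemma gen_inv_converse x y : gen_inv F x y <-> gen F y x.
Proof. exact (proj2 (proj2 (proj2 (proj2 F_dmds))) x y). Qed.

Lemma gen_converse x y : gen F x y <-> gen_inv F y x.
Proof. symmetry. apply gen_inv_converse. Qed.

Lemma N_compact : compact opens N.
Proof. exact (proj1 N_isolating). Qed.

Lemma iterate_compact {C} : compact opens C -> forall j, compact opens (reach N (gen F) C j).
Proof. exact (reach_compact N (gen F) N_compact gen_usc gen_compact). Qed.

(* [stays_fwd k x]: some forward orbit of [x] of length [k] lies in [N];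
   [stays_bwd k x]: some backward orbit of [x] of length [k] lies in [N]. *)
Notation stays_fwd k := (reach N (gen_inv F) N k).
Notation stays_bwd k := (reach N (gen F) N k).

Lemma stays_fwd_closed k : closed opens (stays_fwd k).
Proof. exact (reach_closed N (gen_inv F) N_compact gen_inv_usc gen_inv_compact N_compact k). Qed.

Lemma stays_bwd_closed k : closed opens (stays_bwd k).
Proof. exact (compact_closed (iterate_compact N_compact k)). Qed.

Lemma stays_of_Inv x : Inv F N x -> forall m, stays_fwd m x /\ stays_bwd m x.
Proof.
  intros [_ [s [<- Hs]]] m. split.
  - apply (reach_along N (e := 1%Z)); intros n; [apply Hs | apply gen_converse, Hs].
  - apply (reach_along N (e := (-1)%Z)); intros n; [apply Hs |].
    destruct (Hs (n + -1)%Z) as [_ Hstep]. now replace (n + -1 + 1)%Z with n in Hstep by lia.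
Qed.

Lemma Inv_of_stays x :
  (forall m, stays_fwd m x) -> (forall m, stays_bwd m x) -> Inv F N x.
Proof.
  intros Hfwd Hbwd.
  destruct (chain_exists (fun y => forall m, stays_fwd m y) (gen F) x) as [s [Hs0 Hs]];
    [| exact Hfwd |].
  { intros y Hy.
    destruct (reach_forever_pred N (gen_inv F) (gen F) N_compact gen_inv_usc gen_inv_compact
                gen_compact gen_inv_converse y Hy) as [z [Hyz Hz]].
    exists z. split; [exact Hz | now apply gen_converse]. }
  destruct (chain_exists (fun y => forall m, stays_bwd m y) (fun y z => gen F z y) x)
    as [t [Ht0 Ht]]; [| exact Hbwd |].
  { intros y Hy.
    destruct (reach_forever_pred N (gen F) (gen_inv F) N_compact gen_usc gen_compact
                gen_inv_compact gen_converse y Hy) as [z [Hzy Hz]].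
    now exists z. }
  split; [exact (proj1 (Hfwd 0%nat)) |].
  exists (fun n => if Z_le_dec 0 n then s (Z.to_nat n) else t (Z.to_nat (- n))).
  split; [exact Hs0 |]. intros n. destruct (Z_le_dec 0 n) as [Hn | Hn].
  - destruct (Z_le_dec 0 (n + 1)) as [_ | Hn1]; [| lia].
    replace (Z.to_nat (n + 1)) with (S (Z.to_nat n)) by lia.
    split; [exact (proj1 (proj1 (Hs _) 0%nat)) | apply Hs].
  - split; [exact (proj1 (proj1 (Ht _) 0%nat)) |].
    destruct (Z_le_dec 0 (n + 1)) as [Hn1 | Hn1].
    + replace n with (-1)%Z by lia. simpl. rewrite Hs0, <- Ht0. apply Ht.
    + replace (Z.to_nat (- n)) with (S (Z.to_nat (- (n + 1)))) by lia. apply Ht.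
Qed.

Lemma Inv_compact : compact opens (Inv F N).
Proof.
  refine (compact_ext (compact_and_closed N_compact
            (closed_forall (fun m => closed_and (stays_fwd_closed m) (stays_bwd_closed m)))) _).
  intros x. split.
  - intros [_ Hx]. apply Inv_of_stays; intros m; apply Hx.
  - intros Hx. split; [exact (proj1 Hx) | exact (stays_of_Inv x Hx)].
Qed.

(* Since [Inv N] is the intersection of the decreasing compact sets
   [stays_fwd m ∩ stays_bwd m], one of them already lies in [int N]. *)
Lemma isolation_time :
  exists k, (1 <= k)%nat /\ forall x, stays_fwd k x -> stays_bwd k x -> interior opens N x.
Proof.
  assert (Hm : exists m, forall x, stays_fwd m x -> stays_bwd m x -> interior opens N x).
  { apply NNPP. intros Hnone.
    destruct (compact_directed_inter 0%nat
      (C := fun m x => stays_fwd m x /\ stays_bwd m x /\ ~ interior opens N x) N_compact)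
      as [x [_ Hx]].
    - intros m. apply closed_and; [apply stays_fwd_closed |].
      apply closed_and; [apply stays_bwd_closed | apply closed_compl, interior_open].
    - intros i j. exists (Nat.max i j). intros x [Hf [Hb nI]].
      split; (split; [| split]); auto; apply (reach_N_le N _ (Nat.max i j)); auto; lia.
    - intros m. apply NNPP. intros Hempty. apply Hnone. exists m. intros x Hf Hb.
      apply NNPP. intros nI. apply Hempty. exists x. split; [exact (reach_in N Hf) | auto].
    - apply (proj2 (proj2 (Hx 0%nat))), (proj2 N_isolating).
      apply Inv_of_stays; intros m; apply Hx. }
  destruct Hm as [m Hm]. exists (S m). split; [lia |].
  intros x Hf Hb. apply Hm; now apply reach_N_S.
Qed.

Section IndexPairs.
Variable k : nat.
Hypothesis k_pos : (1 <= k)%nat.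
Hypothesis k_isolates : forall x, stays_fwd k x -> stays_bwd k x -> interior opens N x.

Definition P1 (W : X -> Prop) : X -> Prop :=
  fun x => (exists j, (j < k)%nat /\ reach N (gen F) W j x) \/ stays_bwd k x.

Definition exit_set (W M : X -> Prop) : X -> Prop :=
  fun x => (P1 W x /\ ~ interior opens N x) \/ M x.

Definition P2 (W M : X -> Prop) : X -> Prop :=
  fun x => exists j, (j < k)%nat /\ reach N (gen F) (exit_set W M) j x.

Record admissible (W M : X -> Prop) : Prop := {
  W_compact : compact opens W;
  W_in_N : subset W N;
  Inv_in_W : subset (Inv F N) (interior opens W);
  W_exit : forall j x, (j < k)%nat -> reach N (gen F) W j x -> stays_fwd k x ->
    interior opens N x;
  M_compact : compact opens M;
  M_in_W : subset M W;
  M_exit : forall x, M x -> ~ stays_fwd k x }.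

Arguments W_compact {W M}.
Arguments W_in_N {W M}.
Arguments Inv_in_W {W M}.
Arguments W_exit {W M} _ {j x}.
Arguments M_compact {W M}.
Arguments M_in_W {W M}.
Arguments M_exit {W M} _ {x}.

Lemma P1_in_N W : subset (P1 W) N.
Proof. intros x [[j [_ Hx]] | Hx]; exact (reach_in N Hx). Qed.

Lemma P1_forward {W x y} : P1 W x -> gen F x y -> N y -> P1 W y.
Proof.
  intros [[j [Hj Hx]] | Hx] Hxy Ny.
  - destruct (Nat.eq_dec (S j) k) as [Hjk | Hjk].
    + right. rewrite <- Hjk. split; [exact Ny | exists x; split; [| exact Hxy]].
      exact (reach_mono N (fun _ _ Nz => Nz) Hx).
    + left. exists (S j). split; [lia | split; [exact Ny | exists x; auto]].
  - right. apply reach_N_S. split; [exact Ny | exists x; auto].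
Qed.

Lemma W_in_P1 W : subset W N -> subset W (P1 W).
Proof. intros HWN x Wx. left. exists 0%nat. split; [lia | split; auto]. Qed.

Section Admissible.
Context {W M : X -> Prop} (WM_admissible : admissible W M).

Lemma P1_exit {x} : P1 W x -> stays_fwd k x -> interior opens N x.
Proof.
  intros [[j [Hj Hx]] | Hx] Hfwd; [exact (W_exit WM_admissible Hj Hx Hfwd) | auto].
Qed.

Lemma exit_in_P1 : subset (exit_set W M) (P1 W).
Proof.
  intros x [[Px _] | Mx]; [exact Px |].
  apply W_in_P1; [apply WM_admissible | apply WM_admissible, Mx].
Qed.

Lemma exit_not_stays {x} : exit_set W M x -> ~ stays_fwd k x.
Proof.
  intros [[Px nI] | Mx] Hfwd; [exact (nI (P1_exit Px Hfwd)) | exact (M_exit WM_admissible Mx Hfwd)].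
Qed.

Lemma exit_in_P2 : subset (exit_set W M) (P2 W M).
Proof.
  intros x Ex. exists 0%nat. split; [lia |]. split; [exact Ex |].
  exact (P1_in_N W x (exit_in_P1 x Ex)).
Qed.

Lemma P2_in_P1 : subset (P2 W M) (P1 W).
Proof.
  intros x [j [_ Hx]]. exact (reach_invariant N (fun y z => @P1_forward W y z) exit_in_P1 Hx).
Qed.

(* A point of [F_N^j(exit_set)] staying [k] more steps in [N] would come from a point of
   [exit_set] staying [j + k >= k] steps in [N]. *)
Lemma P2_not_stays {x} : P2 W M x -> ~ stays_fwd k x.
Proof.
  intros [j [_ Hx]] Hfwd.
  destruct (reach_converse N gen_converse _ j k x Hx Hfwd) as [c [Ec Hc]].
  exact (exit_not_stays Ec (reach_N_le N k (j + k) ltac:(lia) Hc)).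
Qed.

Lemma P2_forward {x y} : P2 W M x -> gen F x y -> N y -> P2 W M y.
Proof.
  intros [j [Hj Hx]] Hxy Ny.
  assert (Hy : reach N (gen F) (exit_set W M) (S j) y)
    by (split; [exact Ny | exists x; auto]).
  destruct (Nat.eq_dec (S j) k) as [Hjk | Hjk].
  - exfalso.
    destruct (reach_converse N gen_converse _ (S j) 0 y Hy (conj Ny Ny)) as [c [Ec Hc]].
    rewrite Nat.add_0_r, Hjk in Hc. exact (exit_not_stays Ec Hc).
  - exists (S j). split; [lia | exact Hy].
Qed.

Lemma P1_compact : compact opens (P1 W).
Proof.
  exact (compact_or (compact_bigcup_lt (iterate_compact (W_compact WM_admissible)) k)
                    (iterate_compact N_compact k)).
Qed.

Lemma P2_compact : compact opens (P2 W M).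
Proof.
  refine (compact_bigcup_lt (iterate_compact _) k).
  exact (compact_or (compact_and_closed P1_compact (closed_compl (interior_open N)))
                    (M_compact WM_admissible)).
Qed.

Lemma admissible_weak_index_pair : weak_index_pair opens F N (P1 W) (P2 W M).
Proof.
  split; [exact P1_compact |]. split; [exact P2_compact |].
  split; [exact P2_in_P1 |]. split; [exact (P1_in_N W) |].
  split; [intros y [[x [Px Hxy]] Ny]; exact (P1_forward Px Hxy Ny) |].
  split; [intros y [[x [Px Hxy]] Ny]; exact (P2_forward Px Hxy Ny) |].
  split.
  { (* a point of [bd_F P1] inside [int N] would be a limit of points of [F(P1) \ P1] in [N] *)
    intros x [Hcl Hcl']. apply exit_in_P2. left.
    split; [exact (closure_closed (compact_closed P1_compact) x Hcl) |]. intros Ix.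
    destruct (Hcl' _ (interior_open N) Ix) as [z [Iz [[w [Pw Hwz]] nPz]]].
    exact (nPz (P1_forward Pw Hwz (interior_sub N z Iz))). }
  split.
  { intros x Ix. destruct (Inv_in_W WM_admissible x Ix) as [U [HU [Ux HUW]]].
    exists (fun y => U y /\ ~ P2 W M y).
    split; [exact (open_and HU (compact_closed P2_compact)) |].
    split; [split; [exact Ux | intros HP2] |].
    - exact (P2_not_stays HP2 (proj1 (stays_of_Inv x Ix k))).
    - intros y [Uy nP2]. split; [| exact nP2].
      apply W_in_P1; [apply WM_admissible | exact (HUW y Uy)]. }
  intros x [Px nP2]. apply NNPP. intros nI. exact (nP2 (exit_in_P2 x (or_introl (conj Px nI)))).
Qed.

End Admissible.

Lemma stays_fwd_outside_closed : closed opens (fun x => stays_fwd k x /\ ~ interior opens N x).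
Proof. apply closed_and; [apply stays_fwd_closed | apply closed_compl, interior_open]. Qed.

Lemma admissible_init : exists W M, admissible W M.
Proof.
  destruct (compact_nbhd_avoiding N (gen F) (gen_inv F) N_compact gen_usc gen_compact
              gen_inv_compact gen_converse k Inv_compact (fun x Ix => proj1 Ix)
              stays_fwd_outside_closed) as [W [HW [HWN [HInvW HWexit]]]].
  { intros j x _ Hx [Hfwd nI]. apply nI, k_isolates; [exact Hfwd |].
    apply (reach_N_le N k (j + k)); [lia |]. apply reach_reach.
    refine (reach_mono N _ Hx). intros y Iy _. exact (proj2 (stays_of_Inv y Iy k)). }
  exists W, (fun _ => False). split.
  - exact HW.
  - exact HWN.
  - intros x Ix. exact (interior_in_interior (HInvW x Ix) (proj2 N_isolating x Ix)).
  - intros j x Hj Hx Hfwd. apply NNPP. intros nI. exact (HWexit j x Hj Hx (conj Hfwd nI)).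
  - exact compact_empty.
  - intros x [].
  - intros x [].
Qed.

(* [W'] is a small compact neighbourhood of [P1 W] in [N], and [M'] one of [P2 W M]
   inside [W']. *)
Lemma admissible_step W M :
  admissible W M ->
  exists W' M', admissible W' M' /\
    subset (P1 W) (interior_in opens N (P1 W')) /\
    subset (P2 W M) (interior_in opens N (P2 W' M')).
Proof.
  intros HWM.
  destruct (compact_nbhd_avoiding N (gen F) (gen_inv F) N_compact gen_usc gen_compact
              gen_inv_compact gen_converse k (P1_compact HWM) (P1_in_N W)
              stays_fwd_outside_closed) as [W' [HW' [HW'N [HP1W' HW'exit]]]].
  { intros j x _ Hx [Hfwd nI]. apply nI, (P1_exit HWM); [| exact Hfwd].
    exact (reach_invariant N (fun y z => @P1_forward W y z) (fun y Py => Py) Hx). }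
  destruct (compact_nbhd_avoiding N (gen F) (gen_inv F) N_compact gen_usc gen_compact
              gen_inv_compact gen_converse 1 (P2_compact HWM)
              (fun x Px => P1_in_N W x (P2_in_P1 HWM x Px)) (stays_fwd_closed k))
    as [M0 [HM0 [HM0N [HP2M0 HM0exit]]]].
  { intros [| j] x Hj; [intros [Px _]; exact (P2_not_stays HWM Px) | lia]. }
  set (M' := fun x => W' x /\ M0 x).
  assert (HWM' : admissible W' M').
  { split.
    - exact HW'.
    - exact HW'N.
    - intros x Ix. refine (interior_in_interior (HP1W' x _) (proj2 N_isolating x Ix)).
      apply (W_in_P1 W (W_in_N HWM)), (interior_sub W), (Inv_in_W HWM x Ix).
    - intros j x Hj Hx Hfwd. apply NNPP. intros nI. exact (HW'exit j x Hj Hx (conj Hfwd nI)).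
    - exact (compact_and_closed HW' (compact_closed HM0)).
    - intros x [W'x _]. exact W'x.
    - intros x [W'x M0x]. exact (HM0exit 0%nat x ltac:(lia) (conj M0x (HW'N x W'x))). }
  exists W', M'. split; [exact HWM' |]. split; intros x Px.
  - exact (interior_in_mono (W_in_P1 W' HW'N) x (HP1W' x Px)).
  - apply (interior_in_mono (fun y My => exit_in_P2 HWM' y (or_intror My))).
    exact (interior_in_and (HP1W' x (P2_in_P1 HWM x Px)) (HP2M0 x Px)).
Qed.

End IndexPairs.
End Dynamics.
End MetricSpace.

Theorem mainTheorem6 (X : Type) (opens : (X -> Prop) -> Prop)
  (F : X -> Z -> X -> Prop) (N : X -> Prop) :
  locally_compact opens -> metrizable opens ->
  is_dmds opens F ->
  isolating_neighborhood opens F N ->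
  forall n : nat,
    exists P : nat -> (X -> Prop) * (X -> Prop),
      (forall i : nat, (1 <= i <= n)%nat ->
         weak_index_pair opens F N (fst (P i)) (snd (P i))) /\
      (forall i : nat, (1 <= i < n)%nat ->
         subset (fst (P i)) (interior_in opens N (fst (P (S i)))) /\
         subset (snd (P i)) (interior_in opens N (snd (P (S i))))).
Proof.
  intros _ [d [d_metric opens_metric]] F_dmds N_isolating n.
  destruct (isolation_time opens d d_metric opens_metric F N F_dmds N_isolating)
    as [k [k_pos k_isolates]].
  pose proof (admissible_step opens d d_metric opens_metric F N F_dmds N_isolating k k_pos
                k_isolates) as step.
  destruct (admissible_init opens d d_metric opens_metric F N F_dmds N_isolating k k_pos
              k_isolates) as [W0 [M0 HWM0]].
  set (pair_of := fun p : (X -> Prop) * (X -> Prop) =>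
                    (P1 F N k (fst p), P2 opens F N k (fst p) (snd p))).
  destruct (chain_exists (fun p => admissible opens F N k (fst p) (snd p))
    (fun p q => subset (fst (pair_of p)) (interior_in opens N (fst (pair_of q))) /\
                subset (snd (pair_of p)) (interior_in opens N (snd (pair_of q))))
    (W0, M0)) as [s [_ Hs]]; [| exact HWM0 |].
  { intros [W M] HWM. destruct (step W M HWM) as [W' [M' HWM']]. now exists (W', M'). }
  exists (fun i => pair_of (s i)). split; intros i _; [| apply Hs].
  exact (admissible_weak_index_pair opens d d_metric opens_metric F N F_dmds N_isolating
           k k_pos k_isolates (proj1 (Hs i))).
Qed.
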